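(* Let $\mathbb{I}=\operatorname{diag}(I_1,I_2,I_3)$ with $I_i>0$, let $m>0$, $M>0$, $\bar m=m+M$, $l>0$, $\mathrm{g}>0$, and let $\boldsymbol\chi\in\mathbb{R}^3$ be a unit vector. Consider the reduced Lagrangian $$\ell(\boldsymbol\Omega,\mathbf v,\boldsymbol\Gamma,h)=K(\boldsymbol\Omega,\mathbf v)-\mathrm{g}\,ml\,\boldsymbol\chi\cdot\boldsymbol\Gamma-\mathrm{g}\,\bar m\,h,\qquad K(\boldsymbol\Omega,\mathbf v)=\tfrac12\mathbb{G}_{\alpha\beta}\Omega^\alpha\Omega^\beta+\mathbb{G}_{\alpha b}\Omega^\alpha v^b+\tfrac12\mathbb{G}_{ab}v^av^b,$$ with $(\boldsymbol\Omega,\mathbf v,\boldsymbol\Gamma,h)\in\mathbb{R}^3\times\mathbb{R}^3\times\mathbb{R}^3\times\mathbb{R}$, where the symmetric $6\times6$ matrix $\mathbb{G}$ has blocks $(\mathbb{G}_{\alpha\beta})=\mathbb{I}$, $(\mathbb{G}_{\alpha b})=ml\hat{\boldsymbol\chi}$, $(\mathbb{G}_{a\beta})=-ml\hat{\boldsymbol\chi}$, $(\mathbb{G}_{ab})=\bar m I_{3\times3}$. Let $\rho=(\rho_{ab})$, $\sigma=(\sigma_{ab})$ be invertible constant $3\times 3$ matrices and $\tau=(\tau^a_\alpha)$ a constant $3\times3$ matrix satisfying the matching conditions $$(\mathrm{MC}_1)\ \ \rho_{ab}-\mathbb{G}_{ab}=k\,\delta_{ab}\ \text{for some } k\in\mathbb{R};\qquad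 (\mathrm{MC}_2)\ \ \tau^a_\alpha=(\rho^{ab}-\mathbb{G}^{ab})\mathbb{G}_{b\alpha};\qquad (\mathrm{MC}_3)\ \ \sigma^{ab}=\mathbb{G}^{ab}-\rho^{ab},$$ where upper indices denote entries of inverse matrices (so $(\mathbb{G}^{ab})=(\mathbb{G}_{ab})^{-1}$, $(\rho^{ab})=(\rho_{ab})^{-1}$, $(\sigma^{ab})=(\sigma_{ab})^{-1}$; in particular $\mathbb{G}^{ab}-\rho^{ab}$ is assumed invertible). Define the controlled Lagrangian $$\ell_{\tau,\sigma,\rho}(\boldsymbol\Omega,\mathbf v,\boldsymbol\Gamma)=K_{\tau,\sigma,\rho}(\boldsymbol\Omega,\mathbf v)-\mathrm{g}\,ml\,\boldsymbol\chi\cdot\boldsymbol\Gamma,$$ $$K_{\tau,\sigma,\rho}=K(\Omega^\alpha,\,v^a+\tau^a_\alpha\Omega^\alpha)+\tfrac12\sigma_{ab}\tau^a_\alpha\tau^b_\beta\Omega^\alpha\Omega^\beta+\tfrac12(\rho_{ab}-\mathbb{G}_{ab})\big(v^a+(\mathbb{G}^{ac}\mathbb{G}_{c\alpha}+\tau^a_\alpha)\Omega^\alpha\big)\big(v^b+(\mathbb{G}^{bd}\mathbb{G}_{d\beta}+\tau^b_\beta)\Omega^\beta\big).$$ Consider the controlled equations $$\frac{d}{dt}\frac{\delta\ell}{\delta\boldsymbol\Omega}=\frac{\delta\ell}{\delta\boldsymbol\Omega}\times\boldsymbol\Omega+\frac{\delta\ell}{\delta\mathbf v}\times\mathbf v+\frac{\delta\ell}{\delta\boldsymbol\Gamma}\times\boldsymbol\Gamma,\qquad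 \frac{d}{dt}\frac{\delta\ell}{\delta\mathbf v}=\frac{\delta\ell}{\delta\mathbf v}\times\boldsymbol\Omega+\frac{\delta\ell}{\delta h}\boldsymbol\Gamma+\mathbf u,\qquad \dot{\boldsymbol\Gamma}=\boldsymbol\Gamma\times\boldsymbol\Omega,$$ with the control $$\mathbf u=\frac{d}{dt}\Big(\frac{\delta\ell}{\delta\mathbf v}-\frac{\delta\ell_{\tau,\sigma,\rho}}{\delta\mathbf v}\Big)-\Big(\frac{\delta\ell}{\delta\mathbf v}-\frac{\delta\ell_{\tau,\sigma,\rho}}{\delta\mathbf v}\Big)\times\boldsymbol\Omega+\bar m\,\mathrm{g}\,\boldsymbol\Gamma,$$ and the free equations for the controlled Lagrangian $$\frac{d}{dt}\frac{\delta\ell_{\tau,\sigma,\rho}}{\delta\boldsymbol\Omega}=\frac{\delta\ell_{\tau,\sigma,\rho}}{\delta\boldsymbol\Omega}\times\boldsymbol\Omega+\frac{\delta\ell_{\tau,\sigma,\rho}}{\delta\mathbf v}\times\mathbf v+\frac{\delta\ell_{\tau,\sigma,\rho}}{\delta\boldsymbol\Gamma}\times\boldsymbol\Gamma,\qquad \frac{d}{dt}\frac{\delta\ell_{\tau,\sigma,\rho}}{\delta\mathbf v}=\frac{\delta\ell_{\tau,\sigma,\rho}}{\delta\mathbf v}\times\boldsymbol\Omega,\qquad\dot{\boldsymbol\Gamma}=\boldsymbol\Gamma\times\boldsymbol\Omega.$$ Then a $C^1$ curve $t\mapsto(\boldsymbol\Omega(t),\mathbf v(t),\boldsymbol\Gamma(t))$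 solves the controlled equations with this control if and only if it solves the free equations for $\ell_{\tau,\sigma,\rho}$. (Under $(\mathrm{MC}_1)$, one has $\frac{\delta\ell_{\tau,\sigma,\rho}}{\delta\mathbf v}-\frac{\delta\ell}{\delta\mathbf v}=k\mathbf v$ with $k=\rho_{ab}-\mathbb G_{ab}$ scalar, and $\rho_{ab}=\rho\,\delta_{ab}$ for a scalar $\rho$.)
   Context: Indices: Greek indices $\alpha,\beta\in\{1,2,3\}$ refer to components of $\boldsymbol\Omega$, Latin indices $a,b,c,d\in\{1,2,3\}$ to components of $\mathbf v$; repeated indices are summed. The hat map $\hat{\ }:\mathbb{R}^3\to\mathfrak{so}(3)$ sends $\mathbf x$ to the skew-symmetric matrix with $\hat{\mathbf x}\mathbf y=\mathbf x\times\mathbf y$. For a function $f$ on a vector space, $\delta f/\delta x$ denotes its gradient (partial derivative with respect to the indicated variable, identified with a vector via the dot product); e.g. $\delta\ell/\delta\boldsymbol\Gamma=-\mathrm{g}ml\boldsymbol\chi$ and $\delta\ell/\delta h=-\bar m\mathrm{g}$. Here $\boldsymbol\Omega$ is the body angular velocity of a top on a movable base, $\mathbf v$ the base velocity in the body frame, $\boldsymbol\Gamma$ the vertical upward direction in the body frame and $h$ the base height. *)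

From Stdlib Require Import Reals.
Open Scope R_scope.

Inductive I3 : Set := i1 | i2 | i3.
Definition vec := I3 -> R.
Definition mat := I3 -> I3 -> R.

Definition eqI3 (a b : I3) : bool :=
  match a, b with i1, i1 | i2, i2 | i3, i3 => true | _, _ => false end.

Definition sum3 (f : I3 -> R) : R := f i1 + f i2 + f i3.
Definition delta (a b : I3) : R := if eqI3 a b then 1 else 0.
Definition dot (x y : vec) : R := sum3 (fun a => x a * y a).
Definition mv (A : mat) (x : vec) : vec := fun a => sum3 (fun b => A a b * x b).
Definition mm (A B : mat) : mat := fun a b => sum3 (fun c => A a c * B c b).
Definition bil (A : mat) (x y : vec) : R :=
  sum3 (fun a => sum3 (fun b => A a b * x a * y b)).

Definition cross (x y : vec) : vec := fun a =>
  match a with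
  | i1 => x i2 * y i3 - x i3 * y i2
  | i2 => x i3 * y i1 - x i1 * y i3
  | i3 => x i1 * y i2 - x i2 * y i1
  end.

(* standard basis and hat map: hat x * y = x × y *)
Definition ebas (j : I3) : vec := fun a => delta a j.
Definition hat (x : vec) : mat := fun a b => cross x (ebas b) a.

Definition upd (x : vec) (a : I3) (s : R) : vec :=
  fun b => if eqI3 b a then s else x b.

Definition GOO (In : vec) : mat := fun a b => if eqI3 a b then In a else 0.
Definition GOv (m l : R) (chi : vec) : mat := fun a b => m * l * hat chi a b.
Definition GvO (m l : R) (chi : vec) : mat := fun a b => - (m * l * hat chi a b).
Definition Gvv (m M : R) : mat := fun a b => (m + M) * delta a b.

Definition Kin (In : vec) (m M l : R) (chi : vec) (Om v : vec) : R :=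
  / 2 * bil (GOO In) Om Om + bil (GOv m l chi) Om v + / 2 * bil (Gvv m M) v v.

Definition ell (In : vec) (m M l g : R) (chi : vec)
    (Om v Ga : vec) (h : R) : R :=
  Kin In m M l chi Om v - g * m * l * dot chi Ga - g * (m + M) * h.

(* controlled kinetic energy; Ginv is the inverse of (G_ab) *)
Definition Kc (In : vec) (m M l : R) (chi : vec)
    (tau sigma rho Ginv : mat) (Om v : vec) : R :=
  let tO := mv tau Om in
  let w : vec := fun a =>
    v a + sum3 (fun al => (sum3 (fun c => Ginv a c * GvO m l chi c al) + tau a al) * Om al) in
  Kin In m M l chi Om (fun a => v a + tO a)
  + / 2 * bil sigma tO tO
  + / 2 * bil (fun a b => rho a b - Gvv m M a b) w w.

Definition ellc (In : vec) (m M l g : R) (chi : vec)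
    (tau sigma rho Ginv : mat) (Om v Ga : vec) : R :=
  Kc In m M l chi tau sigma rho Ginv Om v - g * m * l * dot chi Ga.

Definition grad4_O (f : vec -> vec -> vec -> R -> R) (gf : vec -> vec -> vec -> R -> vec) :=
  forall Om v Ga h a, derivable_pt_lim (fun s => f (upd Om a s) v Ga h) (Om a) (gf Om v Ga h a).
Definition grad4_v (f : vec -> vec -> vec -> R -> R) (gf : vec -> vec -> vec -> R -> vec) :=
  forall Om v Ga h a, derivable_pt_lim (fun s => f Om (upd v a s) Ga h) (v a) (gf Om v Ga h a).
Definition grad4_G (f : vec -> vec -> vec -> R -> R) (gf : vec -> vec -> vec -> R -> vec) :=
  forall Om v Ga h a, derivable_pt_lim (fun s => f Om v (upd Ga a s) h) (Ga a) (gf Om v Ga h a).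
Definition grad4_h (f : vec -> vec -> vec -> R -> R) (gf : vec -> vec -> vec -> R -> R) :=
  forall Om v Ga h, derivable_pt_lim (fun s => f Om v Ga s) h (gf Om v Ga h).

Definition grad3_O (f : vec -> vec -> vec -> R) (gf : vec -> vec -> vec -> vec) :=
  forall Om v Ga a, derivable_pt_lim (fun s => f (upd Om a s) v Ga) (Om a) (gf Om v Ga a).
Definition grad3_v (f : vec -> vec -> vec -> R) (gf : vec -> vec -> vec -> vec) :=
  forall Om v Ga a, derivable_pt_lim (fun s => f Om (upd v a s) Ga) (v a) (gf Om v Ga a).
Definition grad3_G (f : vec -> vec -> vec -> R) (gf : vec -> vec -> vec -> vec) :=
  forall Om v Ga a, derivable_pt_lim (fun s => f Om v (upd Ga a s)) (Ga a) (gf Om v Ga a).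

Definition has_deriv3 (f f' : R -> vec) : Prop :=
  forall t a, derivable_pt_lim (fun s => f s a) t (f' t a).

Definition C1curve (f : R -> vec) : Prop :=
  exists f', has_deriv3 f f' /\ forall a, continuity (fun t => f' t a).

Definition is_inv (A B : mat) : Prop :=
  (forall a b, mm A B a b = delta a b) /\ (forall a b, mm B A a b = delta a b).

Definition controlled_eqs
    (dlO dlv dlG : vec -> vec -> vec -> R -> vec) (dlh : vec -> vec -> vec -> R -> R)
    (dcv : vec -> vec -> vec -> vec) (mbar g : R)
    (Om v Ga : R -> vec) (h : R -> R) : Prop :=
  let LO t := dlO (Om t) (v t) (Ga t) (h t) in
  let Lv t := dlv (Om t) (v t) (Ga t) (h t) in
  let LG t := dlG (Om t) (v t) (Ga t) (h t) in
  let Lh t := dlh (Om t) (v t) (Ga t) (h t) in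
  let D t : vec := fun a => Lv t a - dcv (Om t) (v t) (Ga t) a in
  (exists dLO, has_deriv3 LO dLO /\
     forall t a, dLO t a = cross (LO t) (Om t) a + cross (Lv t) (v t) a
                           + cross (LG t) (Ga t) a)
  /\ (exists dLv dD, has_deriv3 Lv dLv /\ has_deriv3 D dD /\
     forall t a, dLv t a = cross (Lv t) (Om t) a + Lh t * Ga t a
        + (dD t a - cross (D t) (Om t) a + mbar * g * Ga t a))
  /\ has_deriv3 Ga (fun t => cross (Ga t) (Om t)).

Definition free_eqs (dcO dcv dcG : vec -> vec -> vec -> vec)
    (Om v Ga : R -> vec) : Prop :=
  let CO t := dcO (Om t) (v t) (Ga t) in
  let Cv t := dcv (Om t) (v t) (Ga t) in
  let CG t := dcG (Om t) (v t) (Ga t) in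
  (exists dCO, has_deriv3 CO dCO /\
     forall t a, dCO t a = cross (CO t) (Om t) a + cross (Cv t) (v t) a
                           + cross (CG t) (Ga t) a)
  /\ (exists dCv, has_deriv3 Cv dCv /\
     forall t a, dCv t a = cross (Cv t) (Om t) a)
  /\ has_deriv3 Ga (fun t => cross (Ga t) (Om t)).

From Stdlib Require Import Reals Lra FunctionalExtensionality.
Open Scope R_scope.

(* The matching conditions force every block that enters the controlled
   Lagrangian to be a multiple of the identity, and then the controlled
   Lagrangian is the original one plus [g m̄ h + k/2 |v|^2]: the gravity
   potential of the base is cancelled and the kinetic energy of the base is
   shaped.  Hence the gradients in Omega and Gamma agree, the gradient in v
   shifts by [k v], and the control is exactly the term that this shift
   produces in the v-equation; in the Omega-equation the shift disappears
   because [(k v) × v = 0]. *)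

Definition scal_mat (s : R) : mat := fun a b => s * delta a b.

Lemma mm_scal_mat_r (X : mat) (s : R) a b : mm X (scal_mat s) a b = X a b * s.
Proof. destruct a, b; unfold mm, scal_mat, sum3, delta; simpl; ring. Qed.

Lemma mm_scal_mat_l (Y : mat) (s : R) a b : mm (scal_mat s) Y a b = s * Y a b.
Proof. destruct a, b; unfold mm, scal_mat, sum3, delta; simpl; ring. Qed.

Lemma scal_mat_inv_unique (X : mat) (s : R) :
  (forall a b, X a b * s = delta a b) -> s <> 0 /\ X = scal_mat (/ s).
Proof.
  intros HX.
  assert (Hs : s <> 0).
  { intros ->. specialize (HX i1 i1). unfold delta in HX; simpl in HX. lra. }
  split; [exact Hs|].
  extensionality a; extensionality b. unfold scal_mat.
  rewrite <- (HX a b). field. exact Hs.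
Qed.

Lemma cross_shift_self (x v : vec) (k : R) a :
  cross (fun b => x b - k * v b) v a = cross x v a.
Proof. destruct a; simpl; ring. Qed.

Lemma dot_upd_self (v : vec) a s :
  dot (upd v a s) (upd v a s) = s * s + (dot v v - v a * v a).
Proof. destruct a; unfold dot, sum3, upd; simpl; ring. Qed.

Lemma derivable_pt_lim_shift_unique (f f0 c : R -> R) x df df0 dc :
  (forall s, f s = f0 s + c s) ->
  derivable_pt_lim f x df -> derivable_pt_lim f0 x df0 ->
  derivable_pt_lim c x dc -> df = df0 + dc.
Proof.
  intros Hf D D0 Dc.
  apply (uniqueness_limite f x); [exact D|].
  apply derivable_pt_lim_ext with (f0 + c)%F.
  - intros s. rewrite Hf. reflexivity.
  - apply derivable_pt_lim_plus; assumption.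
Qed.

Lemma derivable_pt_lim_affine (A C x : R) :
  derivable_pt_lim (fun s => A * s + C) x A.
Proof.
  apply derivable_pt_lim_ext with (mult_real_fct A id + fct_cte C)%F.
  { intros s. reflexivity. }
  replace A with (A * 1 + 0) at 2 by ring.
  apply derivable_pt_lim_plus.
  - apply derivable_pt_lim_scal, derivable_pt_lim_id.
  - apply derivable_pt_lim_const.
Qed.

Lemma derivable_pt_lim_half_sq_norm_upd (k : R) (v : vec) a :
  derivable_pt_lim (fun s => / 2 * k * dot (upd v a s) (upd v a s)) (v a) (k * v a).
Proof.
  apply derivable_pt_lim_ext with
    (mult_real_fct (/ 2 * k) Rsqr + fct_cte (/ 2 * k * (dot v v - v a * v a)))%F.
  { intros s. unfold plus_fct, mult_real_fct, fct_cte, Rsqr.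
    rewrite dot_upd_self. ring. }
  replace (k * v a) with (/ 2 * k * (2 * v a) + 0) by field.
  apply derivable_pt_lim_plus.
  - apply derivable_pt_lim_scal, derivable_pt_lim_Rsqr.
  - apply derivable_pt_lim_const.
Qed.

Lemma grad4_h_ell In m M l g chi dlh :
  grad4_h (ell In m M l g chi) dlh -> dlh = fun _ _ _ _ => - (g * (m + M)).
Proof.
  intros Hlh. extensionality Om; extensionality v; extensionality Ga; extensionality h.
  apply (uniqueness_limite _ _ _ _ (Hlh Om v Ga h)).
  apply derivable_pt_lim_ext with
    (fun s => - (g * (m + M)) * s + (Kin In m M l chi Om v - g * m * l * dot chi Ga)).
  { intros s. unfold ell. ring. }
  apply derivable_pt_lim_affine.
Qed.

Section Matched.

Variables (In : vec) (m M l g : R) (chi : vec) (k : R).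
Hypotheses (Hm : m + M <> 0) (Hmk : m + M + k <> 0) (Hk : k <> 0).

(* What (MC_1)-(MC_3) make of tau and sigma once G_ab is scalar. *)
Definition matched_tau : mat :=
  fun a al => (/ (m + M + k) - / (m + M)) * GvO m l chi a al.
Definition matched_sigma : mat := scal_mat (/ (/ (m + M) - / (m + M + k))).

Definition matched_ellc : vec -> vec -> vec -> R :=
  ellc In m M l g chi matched_tau matched_sigma (scal_mat (m + M + k))
       (scal_mat (/ (m + M))).

Lemma Kc_matched Om v :
  Kc In m M l chi matched_tau matched_sigma (scal_mat (m + M + k))
     (scal_mat (/ (m + M))) Om v
  = Kin In m M l chi Om v + / 2 * k * dot v v.
Proof.
  unfold Kc, Kin, matched_tau, matched_sigma, scal_mat, bil, mv, dot, sum3,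
    GOO, GOv, GvO, Gvv, hat, cross, ebas, delta, eqI3; cbv beta iota.
  field. repeat split; try assumption.
  intros E. apply Hk. field_simplify_eq in E; assumption.
Qed.

Lemma matched_ellc_shift Om v Ga h :
  matched_ellc Om v Ga
  = ell In m M l g chi Om v Ga h + (g * (m + M) * h + / 2 * k * dot v v).
Proof. unfold matched_ellc, ellc, ell. rewrite Kc_matched. ring. Qed.

Lemma grad_O_matched dlO dcO :
  grad4_O (ell In m M l g chi) dlO -> grad3_O matched_ellc dcO ->
  dlO = fun Om v Ga _ => dcO Om v Ga.
Proof.
  intros HlO HcO. extensionality Om; extensionality v; extensionality Ga;
    extensionality h; extensionality a.
  rewrite (derivable_pt_lim_shift_unique _ _ _ _ _ _ 0
             (fun s => matched_ellc_shift (upd Om a s) v Ga h)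
             (HcO Om v Ga a) (HlO Om v Ga h a) (derivable_pt_lim_const _ _)).
  ring.
Qed.

Lemma grad_G_matched dlG dcG :
  grad4_G (ell In m M l g chi) dlG -> grad3_G matched_ellc dcG ->
  dlG = fun Om v Ga _ => dcG Om v Ga.
Proof.
  intros HlG HcG. extensionality Om; extensionality v; extensionality Ga;
    extensionality h; extensionality a.
  rewrite (derivable_pt_lim_shift_unique _ _ _ _ _ _ 0
             (fun s => matched_ellc_shift Om v (upd Ga a s) h)
             (HcG Om v Ga a) (HlG Om v Ga h a) (derivable_pt_lim_const _ _)).
  ring.
Qed.

Lemma grad_v_matched dlv dcv :
  grad4_v (ell In m M l g chi) dlv -> grad3_v matched_ellc dcv ->
  dlv = fun Om v Ga _ a => dcv Om v Ga a - k * v a.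
Proof.
  intros Hlv Hcv. extensionality Om; extensionality v; extensionality Ga;
    extensionality h; extensionality a.
  assert (Dc : derivable_pt_lim
                 (fun s => g * (m + M) * h + / 2 * k * dot (upd v a s) (upd v a s))
                 (v a) (0 + k * v a)).
  { apply (derivable_pt_lim_plus (fun _ => g * (m + M) * h)).
    - apply derivable_pt_lim_const.
    - apply derivable_pt_lim_half_sq_norm_upd. }
  rewrite (derivable_pt_lim_shift_unique _ _ _ _ _ _ _
             (fun s => matched_ellc_shift Om (upd v a s) Ga h)
             (Hcv Om v Ga a) (Hlv Om v Ga h a) Dc).
  ring.
Qed.

End Matched.

Section Equations.

Variables (dcO dcv dcG : vec -> vec -> vec -> vec) (k mbar g : R).
Variables (Om v Ga v' : R -> vec) (h : R -> R).
Hypothesis Hv : has_deriv3 v v'.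

Lemma controlled_eqs_iff_free_eqs_shifted :
  controlled_eqs (fun Om v Ga _ => dcO Om v Ga)
                 (fun Om v Ga _ a => dcv Om v Ga a - k * v a)
                 (fun Om v Ga _ => dcG Om v Ga)
                 (fun _ _ _ _ => - (g * mbar)) dcv mbar g Om v Ga h
  <-> free_eqs dcO dcv dcG Om v Ga.
Proof.
  unfold controlled_eqs, free_eqs; cbv beta zeta.
  split.
  - intros [[dLO [HdLO EqO]] [[dLv [dD [HdLv [HdD EqV]]]] HGa]].
    split; [|split; [|exact HGa]].
    + exists dLO; split; [exact HdLO|].
      intros t a. rewrite EqO, cross_shift_self. reflexivity.
    + exists (fun t a => dLv t a - dD t a); split.
      * intros t a.
        eapply derivable_pt_lim_ext;
          [|exact (derivable_pt_lim_minus _ _ _ _ _ (HdLv t a) (HdD t a))].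
        intros s. unfold minus_fct. ring.
      * intros t a. rewrite EqV. destruct a; simpl; ring.
  - intros [[dCO [HdCO EqO]] [[dCv [HdCv EqV]] HGa]].
    split; [|split; [|exact HGa]].
    + exists dCO; split; [exact HdCO|].
      intros t a. rewrite EqO, cross_shift_self. reflexivity.
    + exists (fun t a => dCv t a - k * v' t a), (fun t a => - k * v' t a).
      split; [|split].
      * intros t a.
        eapply derivable_pt_lim_ext;
          [|exact (derivable_pt_lim_minus _ _ _ _ _ (HdCv t a)
                     (derivable_pt_lim_scal _ k _ _ (Hv t a)))].
        intros s. unfold minus_fct, mult_real_fct. reflexivity.
      * intros t a.
        eapply derivable_pt_lim_ext;
          [|exact (derivable_pt_lim_scal _ (- k) _ _ (Hv t a))].
        intros s. unfold mult_real_fct. ring.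
      * intros t a. rewrite EqV. destruct a; simpl; ring.
Qed.

End Equations.

Theorem mainTheorem1
  (In : vec) (m M l g : R) (chi : vec)
  (rho rhoinv sigma sigmainv tau Ginv : mat) (k : R)
  (dlO dlv dlG : vec -> vec -> vec -> R -> vec) (dlh : vec -> vec -> vec -> R -> R)
  (dcO dcv dcG : vec -> vec -> vec -> vec)
  (Om v Ga : R -> vec) (h : R -> R) :
  (forall a, 0 < In a) -> 0 < m -> 0 < M -> 0 < l -> 0 < g ->
  dot chi chi = 1 ->
  is_inv Ginv (Gvv m M) ->
  is_inv rhoinv rho ->
  is_inv sigmainv sigma ->
  (* MC1 *) (forall a b, rho a b - Gvv m M a b = k * delta a b) ->
  (* MC2 *) (forall a al, tau a al =
                sum3 (fun b => (rhoinv a b - Ginv a b) * GvO m l chi b al)) ->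
  (* MC3 *) (forall a b, sigmainv a b = Ginv a b - rhoinv a b) ->
  grad4_O (ell In m M l g chi) dlO ->
  grad4_v (ell In m M l g chi) dlv ->
  grad4_G (ell In m M l g chi) dlG ->
  grad4_h (ell In m M l g chi) dlh ->
  grad3_O (ellc In m M l g chi tau sigma rho Ginv) dcO ->
  grad3_v (ellc In m M l g chi tau sigma rho Ginv) dcv ->
  grad3_G (ellc In m M l g chi tau sigma rho Ginv) dcG ->
  C1curve Om -> C1curve v -> C1curve Ga ->
  (controlled_eqs dlO dlv dlG dlh dcv (m + M) g Om v Ga h <->
   free_eqs dcO dcv dcG Om v Ga).
Proof.
  intros _ _ _ _ _ _ [HG _] [Hr _] [Hs _] MC1 MC2 MC3
    HlO Hlv HlG Hlh HcO Hcv HcG _ [v' [Hv _]] _.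
  destruct (scal_mat_inv_unique Ginv (m + M)) as [Hm ->].
  { intros a b. rewrite <- (mm_scal_mat_r Ginv). apply HG. }
  assert (Erho : rho = scal_mat (m + M + k)).
  { extensionality a; extensionality b. specialize (MC1 a b).
    unfold Gvv in MC1. unfold scal_mat. lra. }
  subst rho.
  destruct (scal_mat_inv_unique rhoinv (m + M + k)) as [Hmk ->].
  { intros a b. rewrite <- (mm_scal_mat_r rhoinv). apply Hr. }
  assert (Esigmainv : sigmainv = scal_mat (/ (m + M) - / (m + M + k))).
  { extensionality a; extensionality b. rewrite MC3. unfold scal_mat. ring. }
  subst sigmainv.
  destruct (scal_mat_inv_unique sigma (/ (m + M) - / (m + M + k))) as [Hsk ->].
  { intros a b. rewrite Rmult_comm, <- mm_scal_mat_l. apply Hs. }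
  assert (Hk : k <> 0) by (intros ->; apply Hsk; rewrite Rplus_0_r; ring).
  assert (Etau : tau = matched_tau m M l chi k).
  { extensionality a; extensionality al. rewrite MC2.
    unfold matched_tau, scal_mat, sum3, delta; destruct a; simpl; ring. }
  subst tau.
  rewrite (grad_O_matched In m M l g chi k Hm Hmk Hk dlO dcO HlO HcO),
    (grad_v_matched In m M l g chi k Hm Hmk Hk dlv dcv Hlv Hcv),
    (grad_G_matched In m M l g chi k Hm Hmk Hk dlG dcG HlG HcG),
    (grad4_h_ell In m M l g chi dlh Hlh).
  apply (controlled_eqs_iff_free_eqs_shifted _ _ _ k (m + M) g Om v Ga v' h Hv).
Qed.
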